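(* If $b,c\ne 0$, then $\check{f}(x)$ has at most two roots. Furthermore, exactly one of the following statements is true. 1. $\check{f}$ has exactly two roots $x_0$ and $x_1$ at which it changes sign. The derivative $\check{f}'$ is nonzero at $x_0$ and $x_1$, and either $a<1,b<0,c>0$ or $a>1,b>0,c<0$. 2. $\check{f}$ has exactly one root $x_0$ at which it does not change sign. The derivative $\check{f}'$ also has a root at $x_0$, and either $a<1,b<0,c>0$ or $a>1,b>0,c<0$. 3. $\check{f}$ has exactly one root $x_0$ at which it changes sign. The derivative $\check{f}'$ is nonzero at $x_0$, and $bc>0$. 4. $\check{f}$ has no roots, and $bc<0$.
   Context: A function $f:\mathbb{R}^+\to\mathbb{R}^+$ is called strongly hyperbolic if: (1) $\lim_{x\to 0+} f(x)=+\infty$ and $\lim_{x\to+\infty} f(x)=0$; (2) $f$ is strictly convex; (3) for each $b\in\mathbb{R}$, $\lim_{x\to+\infty} f(x+b)/f(x)=1$; (4) $f$ is differentiable; (5) $\ln|f'(x)|$ is strictly convex. Let $f$ be a strongly hyperbolic function, let $a>0$, $b,c\in\mathbb{R}$, and define $\check{f}:(\max\{-b,0\},\infty)\to\mathbb{R}$ by $\check{f}(x)=af(x+b)+c-f(x)$. *)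

From Stdlib Require Import Reals.
From Coquelicot Require Import Coquelicot.
Open Scope R_scope.

Definition strictly_convex_pos (g : R -> R) : Prop :=
  forall x y t, 0 < x -> 0 < y -> x <> y -> 0 < t < 1 ->
    g (t * x + (1 - t) * y) < t * g x + (1 - t) * g y.

(* f : R^+ -> R^+ is strongly hyperbolic (values of f at x <= 0 are irrelevant) *)
Definition strongly_hyperbolic (f : R -> R) : Prop :=
  (forall x, 0 < x -> 0 < f x) /\
  filterlim f (at_right 0) (Rbar_locally p_infty) /\
  is_lim f p_infty 0 /\
  strictly_convex_pos f /\
  (forall b : R, is_lim (fun x => f (x + b) / f x) p_infty 1) /\
  (forall x, 0 < x -> ex_derive f x) /\
  strictly_convex_pos (fun x => ln (Rabs (Derive f x))).

Definition fcheck (f : R -> R) (a b c : R) (x : R) : R :=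
  a * f (x + b) + c - f x.

Definition in_dom (b x : R) : Prop := Rmax (- b) 0 < x.

Definition is_root (g : R -> R) (b x : R) : Prop := in_dom b x /\ g x = 0.

Definition changes_sign (g : R -> R) (x0 : R) : Prop :=
  exists d, 0 < d /\
    forall y z, x0 - d < y < x0 -> x0 < z < x0 + d -> g y * g z < 0.

Definition exactly_one4 (P1 P2 P3 P4 : Prop) : Prop :=
  (P1 /\ ~ P2 /\ ~ P3 /\ ~ P4) \/ (~ P1 /\ P2 /\ ~ P3 /\ ~ P4) \/
  (~ P1 /\ ~ P2 /\ P3 /\ ~ P4) \/ (~ P1 /\ ~ P2 /\ ~ P3 /\ P4).

From Stdlib Require Import Reals Lra Classical.
From Coquelicot Require Import Coquelicot.
Open Scope R_scope.

(* Put g := \check f and L := max(-b, 0).  Because ln|f'| is strictly convex,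
   b (ln|f'(x)| - ln|f'(x+b)|) is strictly decreasing, and b g'(x) has the sign of
   this quantity minus b ln a; so b g' changes sign at most once, from + to -, and
   b g increases strictly and then decreases strictly.  As b g < 0 near L and
   b g -> b c at +oo, b g has a single sign-changing root when b c > 0, and
   otherwise two sign-changing roots, one double root, or none.  At a root,
   comparing f(x + b) with f(x) (f is decreasing) forces a < 1 if b < 0 and
   a > 1 if b > 0. *)

Lemma is_lim_p_infty_abs_lt (f : R -> R) (l eps : R) :
  is_lim f p_infty l -> 0 < eps -> exists M, forall x, M < x -> Rabs (f x - l) < eps.
Proof.
  intros Hlim Heps. apply is_lim_spec in Hlim.
  exact (Hlim (mkposreal eps Heps)).
Qed.

Lemma filterlim_at_right_p_infty_gt (f : R -> R) (x0 M : R) :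
  filterlim f (at_right x0) (Rbar_locally p_infty) ->
  exists d, 0 < d /\ forall x, x0 < x < x0 + d -> M < f x.
Proof.
  intros Hlim.
  destruct (Hlim (fun y => M < y)) as [d Hd]; [now exists M|].
  exists d; split; [apply cond_pos|].
  intros x Hx. apply Hd; [|lra].
  unfold ball; simpl; unfold AbsRing_ball, minus, plus, opp; simpl.
  rewrite Rabs_right; lra.
Qed.

Lemma strictly_convex_pos_decreasing (f : R -> R) :
  (forall x, 0 < x -> 0 < f x) -> strictly_convex_pos f -> is_lim f p_infty 0 ->
  forall x y, 0 < x -> x < y -> f y < f x.
Proof.
  intros f_pos f_conv f_lim x y Hx Hxy.
  apply Rnot_le_lt; intros Hfxy.
  (* once f y >= f x, convexity keeps f above f y beyond y, against f -> 0 *)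
  assert (above : forall z, y < z -> f y < f z).
  { intros z Hz. set (t := (z - y) / (z - x)).
    assert (Ht : 0 < t < 1).
    { unfold t; split; [apply Rdiv_lt_0_compat; lra|].
      apply Rmult_lt_reg_r with (z - x); [lra|]. field_simplify; lra. }
    pose proof (f_conv x z t Hx ltac:(lra) ltac:(lra) Ht) as Hc.
    replace (t * x + (1 - t) * z) with y in Hc by (unfold t; field; lra).
    nra. }
  destruct (is_lim_p_infty_abs_lt f 0 (f y) f_lim (f_pos y ltac:(lra))) as [M HM].
  set (z := Rmax M y + 1).
  assert (M < z /\ y < z) by (unfold z; pose proof (Rmax_l M y); pose proof (Rmax_r M y); lra).
  specialize (HM z ltac:(lra)). specialize (above z ltac:(lra)).
  rewrite Rminus_0_r, Rabs_right in HM by (pose proof (f_pos z); lra). lra.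
Qed.

Lemma Derive_le_slope (f : R -> R) (x y : R) :
  strictly_convex_pos f -> 0 < x -> x < y -> ex_derive f x ->
  Derive f x <= (f y - f x) / (y - x).
Proof.
  intros f_conv Hx Hxy f_der.
  set (Q := (f y - f x) / (y - x)).
  assert (chord : forall h, 0 < h < y - x -> (f (x + h) - f x) / h < Q).
  { intros h Hh. set (t := 1 - h / (y - x)).
    assert (Ht : 0 < t < 1).
    { unfold t. enough (0 < h / (y - x) < 1) by lra.
      split; [apply Rdiv_lt_0_compat; lra|].
      apply Rmult_lt_reg_r with (y - x); [lra|]. field_simplify; lra. }
    pose proof (f_conv x y t Hx ltac:(lra) ltac:(lra) Ht) as Hc.
    replace (t * x + (1 - t) * y) with (x + h) in Hc by (unfold t; field; lra).
    apply Rmult_lt_reg_r with h; [lra|]. unfold Q, t in *.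
    replace ((f (x + h) - f x) / h * h) with (f (x + h) - f x) by (field; lra).
    replace ((f y - f x) / (y - x) * h) with (h / (y - x) * (f y - f x)) by (field; lra).
    lra. }
  apply Rnot_lt_le; intros HQ.
  pose proof (proj1 (is_derive_Reals _ _ _) (Derive_correct f x f_der)) as Hd.
  destruct (Hd (Derive f x - Q) ltac:(lra)) as [del Hdel].
  set (h := Rmin (del / 2) ((y - x) / 2)).
  assert (Hh : 0 < h /\ h < del /\ h < y - x).
  { unfold h. pose proof (cond_pos del). pose proof (Rmin_l (del / 2) ((y - x) / 2)).
    pose proof (Rmin_r (del / 2) ((y - x) / 2)).
    pose proof (Rmin_glb_lt (del / 2) ((y - x) / 2) 0 ltac:(lra) ltac:(lra)). lra. }
  specialize (Hdel h ltac:(lra) ltac:(rewrite Rabs_right; lra)).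
  specialize (chord h ltac:(lra)).
  apply Rabs_def2 in Hdel. lra.
Qed.

Lemma strictly_convex_pos_increment_lt (h : R -> R) (x y d : R) :
  strictly_convex_pos h -> 0 < x -> x < y -> 0 < d -> h (x + d) - h x < h (y + d) - h y.
Proof.
  intros h_conv Hx Hxy Hd.
  (* x + d and y split [x, y + d] with complementary weights *)
  set (t := (y - x) / (y - x + d)).
  assert (Ht : 0 < t < 1).
  { unfold t; split; [apply Rdiv_lt_0_compat; lra|].
    apply Rmult_lt_reg_r with (y - x + d); [lra|]. field_simplify; lra. }
  pose proof (h_conv x (y + d) t Hx ltac:(lra) ltac:(lra) Ht) as H1.
  pose proof (h_conv x (y + d) (1 - t) Hx ltac:(lra) ltac:(lra) ltac:(lra)) as H2.
  replace (t * x + (1 - t) * (y + d)) with (x + d) in H1 by (unfold t; field; lra).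
  replace ((1 - t) * x + (1 - (1 - t)) * (y + d)) with y in H2 by (unfold t; field; lra).
  lra.
Qed.

Lemma in_dom_pos (b x : R) : in_dom b x -> 0 < x /\ 0 < x + b.
Proof. unfold in_dom; pose proof (Rmax_l (- b) 0); pose proof (Rmax_r (- b) 0); lra. Qed.

Lemma strictly_convex_pos_shift_diff_decr (h : R -> R) (b x y : R) :
  strictly_convex_pos h -> b <> 0 -> in_dom b x -> x < y ->
  b * (h y - h (y + b)) < b * (h x - h (x + b)).
Proof.
  intros h_conv Hb Hx Hxy. destruct (in_dom_pos b x Hx) as [Hx0 Hxb].
  destruct (Rdichotomy b 0 Hb) as [Hneg | Hpos].
  - pose proof (strictly_convex_pos_increment_lt h (x + b) (y + b) (- b) h_conv Hxb
      ltac:(lra) ltac:(lra)) as Hinc.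
    replace (x + b + - b) with x in Hinc by ring. replace (y + b + - b) with y in Hinc by ring.
    nra.
  - pose proof (strictly_convex_pos_increment_lt h x y b h_conv Hx0 Hxy Hpos). nra.
Qed.

Lemma mul_ln_sub_nonpos (k u w : R) :
  0 < u -> 0 < w -> k * (u - w) <= 0 -> k * (ln u - ln w) <= 0.
Proof.
  intros Hu Hw Hk.
  destruct (Rtotal_order k 0) as [Hneg | [-> | Hpos]]; [| lra |].
  - assert (w <= u) by nra. pose proof (ln_le w u Hw ltac:(lra)). nra.
  - assert (u <= w) by nra. pose proof (ln_le u w Hu ltac:(lra)). nra.
Qed.

Lemma Derive_local_max (g : R -> R) (a c b : R) :
  a < c < b -> ex_derive g c -> (forall x, a < x < b -> g x <= g c) -> Derive g c = 0.
Proof.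
  intros Hc Hder Hmax.
  rewrite <- (Derive_Reals g c (ex_derive_Reals_0 g c Hder)).
  apply (deriv_maximum g a b c); try lra.
  intros x Hax Hxb. apply Hmax; lra.
Qed.

Lemma changes_sign_intro (g : R -> R) (x0 d s : R) :
  0 < d -> s <> 0 ->
  (forall y, x0 - d < y < x0 -> s * g y < 0) ->
  (forall z, x0 < z < x0 + d -> 0 < s * g z) -> changes_sign g x0.
Proof.
  intros Hd Hs Hleft Hright. exists d; split; [exact Hd|].
  intros y z Hy Hz. specialize (Hleft y Hy). specialize (Hright z Hz).
  assert (0 < s * s) by (destruct (Rdichotomy s 0 Hs); nra). nra.
Qed.

Lemma not_changes_sign_neg (g : R -> R) (x0 d : R) :
  0 < d -> (forall y, x0 - d < y < x0 -> g y < 0) ->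
  (forall z, x0 < z < x0 + d -> g z < 0) -> ~ changes_sign g x0.
Proof.
  intros Hd Hleft Hright [e [He Hs]].
  set (m := Rmin d e / 2).
  assert (0 < m /\ m < d /\ m < e).
  { unfold m. pose proof (Rmin_l d e). pose proof (Rmin_r d e).
    pose proof (Rmin_glb_lt d e 0 Hd He). lra. }
  specialize (Hs (x0 - m) (x0 + m) ltac:(lra) ltac:(lra)).
  specialize (Hleft (x0 - m) ltac:(lra)). specialize (Hright (x0 + m) ltac:(lra)). nra.
Qed.

(* [root_on (Rmax (- b) 0) g] unfolds to [is_root g b]; the predicates below carry
   the parameter condition [P] as their last conjunct, so that for [L := Rmax (- b) 0]
   they are literally the four cases of the theorem. *)
Definition root_on (L : R) (g : R -> R) (x : R) : Prop := L < x /\ g x = 0.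

Definition two_crossing_roots (L : R) (g : R -> R) (P : Prop) : Prop :=
  exists x0 x1, x0 <> x1 /\ root_on L g x0 /\ root_on L g x1 /\
    (forall x, root_on L g x -> x = x0 \/ x = x1) /\
    changes_sign g x0 /\ changes_sign g x1 /\
    Derive g x0 <> 0 /\ Derive g x1 <> 0 /\ P.

Definition touching_root (L : R) (g : R -> R) (P : Prop) : Prop :=
  exists x0, root_on L g x0 /\ (forall x, root_on L g x -> x = x0) /\
    ~ changes_sign g x0 /\ Derive g x0 = 0 /\ P.

Definition crossing_root (L : R) (g : R -> R) (P : Prop) : Prop :=
  exists x0, root_on L g x0 /\ (forall x, root_on L g x -> x = x0) /\
    changes_sign g x0 /\ Derive g x0 <> 0 /\ P.

Definition root_free (L : R) (g : R -> R) (P : Prop) : Prop :=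
  (forall x, ~ root_on L g x) /\ P.

Section Unimodal.

Variables (G : R -> R) (L l : R).

Hypothesis G_derivable : forall x, L < x -> ex_derive G x.
Hypothesis Derive_G_drop : forall x y, L < x -> x < y -> Derive G x <= 0 -> Derive G y < 0.

Lemma G_continuous x : L < x -> continuity_pt G x.
Proof.
  intros Hx. apply continuity_pt_filterlim.
  exact (ex_derive_continuous G x (G_derivable x Hx)).
Qed.

Lemma G_mvt u v : L < u -> u < v -> exists c, u < c < v /\ G v - G u = Derive G c * (v - u).
Proof.
  intros Hu Huv.
  destruct (MVT_cor2 G (Derive G) u v Huv) as [c [E Hc]].
  - intros x Hx. apply is_derive_Reals, Derive_correct, G_derivable. lra.
  - exists c; split; [exact Hc | exact E].
Qed.

Lemma G_lt_of_Derive_nonneg u v : L < u -> u < v -> 0 <= Derive G v -> G u < G v.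
Proof.
  intros Hu Huv Hv. destruct (G_mvt u v Hu Huv) as [c [Hc E]].
  assert (0 < Derive G c).
  { apply Rnot_le_lt; intros Hc0. pose proof (Derive_G_drop c v ltac:(lra) ltac:(lra) Hc0). lra. }
  nra.
Qed.

Lemma G_lt_of_Derive_nonpos u v : L < u -> u < v -> Derive G u <= 0 -> G v < G u.
Proof.
  intros Hu Huv Hu0. destruct (G_mvt u v Hu Huv) as [c [Hc E]].
  pose proof (Derive_G_drop u c Hu ltac:(lra) Hu0). nra.
Qed.

Lemma G_quasiconcave u v w : L < u -> u < v -> v < w -> G u < G v \/ G w < G v.
Proof.
  intros Hu Huv Hvw. destruct (Rle_lt_dec 0 (Derive G v)) as [Hv | Hv].
  - left. exact (G_lt_of_Derive_nonneg u v Hu Huv Hv).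
  - right. exact (G_lt_of_Derive_nonpos v w ltac:(lra) Hvw ltac:(lra)).
Qed.

Lemma root_on_at_most_two x y z :
  root_on L G x -> root_on L G y -> root_on L G z -> x = y \/ x = z \/ y = z.
Proof.
  intros [Hx Gx] [Hy Gy] [Hz Gz].
  assert (no_three : forall u v w, L < u -> G u = 0 -> G v = 0 -> G w = 0 -> u < v -> v < w -> False).
  { intros u v w Hu Gu Gv Gw Huv Hvw. destruct (G_quasiconcave u v w Hu Huv Hvw); lra. }
  destruct (Rtotal_order x y) as [Hxy | [Hxy | Hxy]]; [| now left |];
  destruct (Rtotal_order x z) as [Hxz | [Hxz | Hxz]]; try (right; left; exact Hxz);
  destruct (Rtotal_order y z) as [Hyz | [Hyz | Hyz]]; try (right; right; exact Hyz);
  exfalso; first [ now apply (no_three x y z) | now apply (no_three x z y)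
                 | now apply (no_three y x z) | now apply (no_three y z x)
                 | now apply (no_three z x y) | now apply (no_three z y x) | lra ].
Qed.

Lemma G_root_between p q :
  L < p -> p <= q -> G p * G q <= 0 -> exists r, p <= r <= q /\ G r = 0.
Proof.
  intros Hp Hpq Hpq0.
  destruct (Req_dec (G p) 0) as [Gp | Gp]; [now exists p; split; [lra|]|].
  destruct (Req_dec (G q) 0) as [Gq | Gq]; [now exists q; split; [lra|]|].
  assert (Hlt : p < q) by (destruct Hpq as [Hpq | ->]; [exact Hpq | nra]).
  assert (cont : forall x, p <= x <= q -> continuity_pt G x) by (intros; apply G_continuous; lra).
  destruct (Rdichotomy (G p) 0 Gp) as [Gneg | Gpos].
  - assert (0 < G q) by (destruct (Rdichotomy (G q) 0 Gq); nra).
    destruct (Ranalysis5.IVT_interv G p q cont Hlt Gneg ltac:(lra)) as [r Hr].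
    now exists r.
  - assert (G q < 0) by (destruct (Rdichotomy (G q) 0 Gq); nra).
    destruct (Ranalysis5.IVT_interv (fun x => - G x) p q
      ltac:(intros; now apply continuity_pt_opp, cont) Hlt ltac:(lra) ltac:(lra)) as [r Hr].
    exists r; split; [apply Hr | lra].
Qed.

Hypothesis G_neg_near_L : exists d, 0 < d /\ forall x, L < x < L + d -> G x < 0.
Hypothesis G_lim : is_lim G p_infty l.

Lemma G_eventually_sign : l <> 0 -> exists M, forall x, M < x -> 0 < l * G x.
Proof.
  intros Hl. assert (Hll : 0 < l * l) by (destruct (Rdichotomy l 0 Hl); nra).
  destruct (is_lim_p_infty_abs_lt (fun x => l * G x) (l * l) (l * l)
    (is_lim_scal_l G l p_infty l G_lim) Hll) as [M HM].
  exists M. intros x Hx. specialize (HM x Hx). apply Rabs_def2 in HM. lra.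
Qed.

Lemma G_neg_before_roots y : L < y -> (forall x, root_on L G x -> y < x) -> G y < 0.
Proof.
  intros Hy Hroots. destruct G_neg_near_L as [d [Hd Hneg]].
  set (p := L + Rmin d (y - L) / 2).
  assert (Hp : L < p < L + d /\ p <= y).
  { unfold p. pose proof (Rmin_l d (y - L)). pose proof (Rmin_r d (y - L)).
    pose proof (Rmin_glb_lt d (y - L) 0 Hd ltac:(lra)). lra. }
  specialize (Hneg p (proj1 Hp)).
  apply Rnot_le_lt; intros Gy.
  destruct (G_root_between p y ltac:(lra) ltac:(lra) ltac:(nra)) as [r [Hr Gr]].
  specialize (Hroots r ltac:(split; [lra | exact Gr])). lra.
Qed.

Lemma G_sign_after_roots z : l <> 0 -> L < z -> (forall x, root_on L G x -> x < z) -> 0 < l * G z.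
Proof.
  intros Hl Hz Hroots. destruct (G_eventually_sign Hl) as [M HM].
  set (q := Rmax M z + 1).
  assert (Hq : M < q /\ z <= q) by (unfold q; pose proof (Rmax_l M z); pose proof (Rmax_r M z); lra).
  specialize (HM q (proj1 Hq)).
  apply Rnot_le_lt; intros Gz.
  assert (Hll : 0 < l * l) by (destruct (Rdichotomy l 0 Hl); nra).
  destruct (G_root_between z q Hz (proj2 Hq)) as [r [Hr Gr]].
  { enough (l * l * (G z * G q) <= 0) by nra. nra. }
  specialize (Hroots r ltac:(split; [lra | exact Gr])). lra.
Qed.

Lemma G_pos_between_roots u w y : root_on L G u -> root_on L G w -> u < y < w -> 0 < G y.
Proof.
  intros [Hu Gu] [Hw Gw] Hy.
  destruct (G_quasiconcave u y w Hu (proj1 Hy) (proj2 Hy)); lra.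
Qed.

Lemma crossing_root_of_pos_lim (P : Prop) : 0 < l -> P -> crossing_root L G P.
Proof.
  intros Hl HP.
  destruct G_neg_near_L as [d [Hd Hneg]].
  destruct (G_eventually_sign ltac:(lra)) as [M HM].
  set (p := L + d / 2). set (q := Rmax M p + 1).
  assert (Hq : M < q /\ p <= q) by (unfold q; pose proof (Rmax_l M p); pose proof (Rmax_r M p); lra).
  pose proof (Hneg p ltac:(unfold p; lra)) as Gp. pose proof (HM q (proj1 Hq)) as Gq.
  destruct (G_root_between p q ltac:(unfold p; lra) (proj2 Hq) ltac:(nra)) as [x0 [Hx0 G0]].
  assert (R0 : root_on L G x0) by (split; [unfold p in Hx0; lra | exact G0]).
  assert (unique : forall x, root_on L G x -> x = x0).
  { assert (no_two : forall u w, root_on L G u -> root_on L G w -> u < w -> False).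
    { intros u w [Hu Gu] [Hw Gw] Huw. set (q' := Rmax M w + 1).
      pose proof (Rmax_l M w). pose proof (Rmax_r M w).
      specialize (HM q' ltac:(unfold q'; lra)).
      destruct (G_quasiconcave u w q' Hu Huw ltac:(unfold q'; lra)); nra. }
    intros x Rx. destruct (Rtotal_order x x0) as [Hlt | [Heq | Hgt]]; [| exact Heq |];
      exfalso; [apply (no_two x x0) | apply (no_two x0 x)]; assumption. }
  assert (left : forall y, L < y < x0 -> G y < 0).
  { intros y Hy. apply G_neg_before_roots; [lra|]. intros x Rx. rewrite (unique x Rx). lra. }
  assert (right : forall z, x0 < z -> 0 < G z).
  { intros z Hz. enough (0 < l * G z) by nra.
    apply G_sign_after_roots; [lra | destruct R0; lra |].
    intros x Rx. rewrite (unique x Rx). exact Hz. }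
  exists x0. split; [exact R0 | split; [exact unique | split; [| split; [| exact HP]]]].
  - destruct R0 as [HL0 _].
    apply (changes_sign_intro G x0 (x0 - L) 1); try lra; intros t Ht; rewrite Rmult_1_l.
    + apply left; lra.
    + apply right; lra.
  - intros D0. destruct R0 as [HL0 _].
    pose proof (G_lt_of_Derive_nonpos x0 (x0 + 1) HL0 ltac:(lra) ltac:(lra)).
    pose proof (right (x0 + 1) ltac:(lra)). lra.
Qed.

Lemma two_crossing_roots_of_neg_lim (P : Prop) u w :
  l < 0 -> root_on L G u -> root_on L G w -> u < w -> P -> two_crossing_roots L G P.
Proof.
  intros Hl Ru Rw Huw HP.
  assert (roots : forall x, root_on L G x -> x = u \/ x = w).
  { intros x Rx. destruct (root_on_at_most_two x u w Rx Ru Rw) as [E | [E | E]]; auto. lra. }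
  destruct Ru as [Hu Gu], Rw as [Hw Gw].
  assert (left : forall y, L < y < u -> G y < 0).
  { intros y Hy. apply G_neg_before_roots; [lra|].
    intros x Rx. destruct (roots x Rx) as [-> | ->]; lra. }
  assert (middle : forall y, u < y < w -> 0 < G y)
    by (intros y Hy; apply (G_pos_between_roots u w); [split | split |]; auto).
  assert (right : forall z, w < z -> G z < 0).
  { intros z Hz. enough (0 < l * G z) by nra.
    apply G_sign_after_roots; [lra | lra |].
    intros x Rx. destruct (roots x Rx) as [-> | ->]; lra. }
  set (m := (u + w) / 2).
  pose proof (middle m ltac:(unfold m; lra)).
  exists u, w. repeat split; auto; try lra.
  - apply (changes_sign_intro G u (Rmin (u - L) (w - u)) 1); try lra.
    + apply Rmin_glb_lt; lra.
    + intros y Hy. rewrite Rmult_1_l. pose proof (Rmin_l (u - L) (w - u)). apply left; lra.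
    + intros z Hz. rewrite Rmult_1_l. pose proof (Rmin_r (u - L) (w - u)). apply middle; lra.
  - apply (changes_sign_intro G w (w - u) (-1)); try lra; intros t Ht.
    + pose proof (middle t ltac:(lra)). lra.
    + pose proof (right t ltac:(lra)). lra.
  - intros D0. pose proof (G_lt_of_Derive_nonpos u m Hu ltac:(unfold m; lra) ltac:(lra)). lra.
  - intros D0. pose proof (G_lt_of_Derive_nonneg m w ltac:(unfold m; lra) ltac:(unfold m; lra) ltac:(lra)). lra.
Qed.

Lemma touching_root_of_neg_lim (P : Prop) x0 :
  l < 0 -> root_on L G x0 -> (forall x, root_on L G x -> x = x0) -> P -> touching_root L G P.
Proof.
  intros Hl R0 unique HP.
  destruct R0 as [HL0 G0].
  assert (left : forall y, L < y < x0 -> G y < 0).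
  { intros y Hy. apply G_neg_before_roots; [lra|]. intros x Rx. rewrite (unique x Rx). lra. }
  assert (right : forall z, x0 < z -> G z < 0).
  { intros z Hz. enough (0 < l * G z) by nra.
    apply G_sign_after_roots; [lra | lra |].
    intros x Rx. rewrite (unique x Rx). exact Hz. }
  exists x0. split; [split; assumption | split; [exact unique | split; [| split; [| exact HP]]]].
  - apply (not_changes_sign_neg G x0 (x0 - L)); [lra | |]; intros t Ht.
    + apply left; lra.
    + apply right; lra.
  - apply (Derive_local_max G L x0 (x0 + 1)); [lra | apply G_derivable; lra |].
    intros x Hx. destruct (Rtotal_order x x0) as [H | [-> | H]].
    + pose proof (left x ltac:(lra)). lra.
    + lra.
    + pose proof (right x H). lra.
Qed.

Lemma root_cases_of_neg_lim (P Q : Prop) :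
  l < 0 -> ((exists x, root_on L G x) -> P) -> Q ->
  two_crossing_roots L G P \/ touching_root L G P \/ root_free L G Q.
Proof.
  intros Hl HP HQ.
  destruct (classic (exists x, root_on L G x)) as [[x0 R0] | none].
  - destruct (classic (exists x1, root_on L G x1 /\ x1 <> x0)) as [[x1 [R1 Hne]] | only].
    + left. destruct (Rdichotomy x1 x0 Hne).
      * apply (two_crossing_roots_of_neg_lim P x1 x0); eauto.
      * apply (two_crossing_roots_of_neg_lim P x0 x1); eauto.
    + right; left. apply (touching_root_of_neg_lim P x0); eauto.
      intros x Rx. apply NNPP. intros Hne. apply only. eauto.
  - right; right. split; [| exact HQ]. intros x Rx. apply none. eauto.
Qed.

End Unimodal.

Lemma root_on_scal (L k : R) (g : R -> R) (x : R) :
  k <> 0 -> root_on L (fun t => k * g t) x <-> root_on L g x.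
Proof.
  intros Hk. unfold root_on. split; intros [Hx Gx]; split; auto.
  - destruct (Rmult_integral _ _ Gx); [contradiction | assumption].
  - rewrite Gx. ring.
Qed.

Lemma changes_sign_scal (k : R) (g : R -> R) (x : R) :
  k <> 0 -> changes_sign (fun t => k * g t) x <-> changes_sign g x.
Proof.
  intros Hk. assert (Hkk : 0 < k * k) by (destruct (Rdichotomy k 0 Hk); nra).
  split; intros [d [Hd Hs]]; exists d; split; auto; intros y z Hy Hz; specialize (Hs y z Hy Hz).
  - nra.
  - replace (k * g y * (k * g z)) with (k * k * (g y * g z)) by ring. nra.
Qed.

Lemma root_cases_scal (L k : R) (g : R -> R) (P1 P2 P3 P4 : Prop) :
  k <> 0 ->
  two_crossing_roots L (fun t => k * g t) P1 \/ touching_root L (fun t => k * g t) P2 \/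
  crossing_root L (fun t => k * g t) P3 \/ root_free L (fun t => k * g t) P4 ->
  two_crossing_roots L g P1 \/ touching_root L g P2 \/ crossing_root L g P3 \/ root_free L g P4.
Proof.
  intros Hk. unfold two_crossing_roots, touching_root, crossing_root, root_free.
  setoid_rewrite (root_on_scal L k g _ Hk). setoid_rewrite (changes_sign_scal k g _ Hk).
  setoid_rewrite Derive_scal.
  assert (scal_eq0 : forall D, k * D = 0 <-> D = 0).
  { intros D; split; intros E; [destruct (Rmult_integral _ _ E); [contradiction|] | rewrite E; ring]; assumption. }
  setoid_rewrite scal_eq0. tauto.
Qed.

Lemma exactly_one4_root_cases (L : R) (g : R -> R) (P1 P2 P3 P4 : Prop) :
  two_crossing_roots L g P1 \/ touching_root L g P2 \/ crossing_root L g P3 \/ root_free L g P4 ->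
  exactly_one4 (two_crossing_roots L g P1) (touching_root L g P2)
    (crossing_root L g P3) (root_free L g P4).
Proof.
  set (unique_root := exists x0, root_on L g x0 /\ forall x, root_on L g x -> x = x0).
  assert (two_not_unique : two_crossing_roots L g P1 -> ~ unique_root).
  { intros (x0 & x1 & Hne & R0 & R1 & _) (y & _ & Uy). apply Hne.
    now rewrite (Uy x0 R0), (Uy x1 R1). }
  assert (touching_unique : touching_root L g P2 -> unique_root)
    by (intros (x0 & R0 & U0 & _); now exists x0).
  assert (crossing_unique : crossing_root L g P3 -> unique_root)
    by (intros (x0 & R0 & U0 & _); now exists x0).
  assert (touching_not_crossing : touching_root L g P2 -> ~ crossing_root L g P3).
  { intros (x0 & _ & U0 & NC0 & _) (y & Ry & _ & Cy & _). rewrite (U0 y Ry) in Cy. auto. }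
  assert (free_no_root : root_free L g P4 -> ~ unique_root /\ ~ two_crossing_roots L g P1).
  { intros [none _]. split; [intros (x0 & R0 & _) | intros (x0 & _ & _ & R0 & _)]; exact (none x0 R0). }
  unfold exactly_one4. intuition.
Qed.

Section Fcheck.

Variables (f : R -> R) (a b c : R).

Hypothesis f_sh : strongly_hyperbolic f.
Hypothesis a_pos : 0 < a.
Hypothesis b_neq0 : b <> 0.

Lemma f_decreasing x y : 0 < x -> x < y -> f y < f x.
Proof.
  destruct f_sh as (f_pos & _ & f_lim & f_conv & _).
  exact (strictly_convex_pos_decreasing f f_pos f_conv f_lim x y).
Qed.

Lemma Derive_f_neg x : 0 < x -> Derive f x < 0.
Proof.
  intros Hx. destruct f_sh as (_ & _ & _ & f_conv & _ & f_der & _).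
  pose proof (Derive_le_slope f x (x + 1) f_conv Hx ltac:(lra) (f_der x Hx)).
  pose proof (f_decreasing x (x + 1) Hx ltac:(lra)).
  replace (x + 1 - x) with 1 in * by ring. lra.
Qed.

Lemma is_derive_fcheck x :
  in_dom b x -> is_derive (fcheck f a b c) x (Rabs (Derive f x) - a * Rabs (Derive f (x + b))).
Proof.
  intros Hx. destruct (in_dom_pos b x Hx) as [Hx0 Hxb].
  destruct f_sh as (_ & _ & _ & _ & _ & f_der & _).
  rewrite !Rabs_left by (apply Derive_f_neg; lra).
  unfold fcheck. auto_derive; [repeat split; apply f_der; lra |].
  change (fun t => f t) with f. ring.
Qed.

Lemma ex_derive_fcheck x : in_dom b x -> ex_derive (fcheck f a b c) x.
Proof. intros Hx. eexists. exact (is_derive_fcheck x Hx). Qed.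

Lemma Derive_fcheck_drop x y :
  in_dom b x -> x < y -> b * Derive (fcheck f a b c) x <= 0 -> b * Derive (fcheck f a b c) y < 0.
Proof.
  intros Hx Hxy Hdx.
  assert (Hy : in_dom b y) by (unfold in_dom in *; lra).
  destruct f_sh as (_ & _ & _ & _ & _ & _ & h_conv).
  set (D := fun t => Rabs (Derive f t)).
  assert (D_pos : forall t, 0 < t -> 0 < D t)
    by (intros t Ht; apply Rabs_pos_lt, Rlt_not_eq, Derive_f_neg, Ht).
  (* b g' has the sign of b (ln D t - ln (a D (t + b))), which strictly decreases in t *)
  assert (ln_aD : forall t, in_dom b t -> ln (a * D (t + b)) = ln a + ln (D (t + b))).
  { intros t Ht. destruct (in_dom_pos b t Ht). rewrite ln_mult by auto using D_pos. reflexivity. }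
  assert (sign_link : forall t, in_dom b t -> forall k, k * Derive (fcheck f a b c) t <= 0 ->
            k * (ln (D t) - ln (a * D (t + b))) <= 0).
  { intros t Ht k Hk. destruct (in_dom_pos b t Ht).
    rewrite (is_derive_unique _ _ _ (is_derive_fcheck t Ht)) in Hk.
    apply mul_ln_sub_nonpos; [apply D_pos; lra | apply Rmult_lt_0_compat; auto; apply D_pos; lra |].
    exact Hk. }
  pose proof (strictly_convex_pos_shift_diff_decr _ b x y h_conv b_neq0 Hx Hxy) as Hdecr.
  pose proof (sign_link x Hx b Hdx) as Hsign_x.
  apply Rnot_le_lt; intros Hdy.
  pose proof (sign_link y Hy (- b) ltac:(lra)) as Hsign_y.
  rewrite ln_aD in Hsign_x, Hsign_y by assumption. unfold D in *. lra.
Qed.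

Lemma fcheck_neg_near_dom :
  exists d, 0 < d /\ forall x, Rmax (- b) 0 < x < Rmax (- b) 0 + d -> b * fcheck f a b c x < 0.
Proof.
  destruct f_sh as (f_pos & f_lim0 & _).
  unfold fcheck. destruct (Rdichotomy b 0 b_neq0) as [Hneg | Hpos].
  - rewrite Rmax_left by lra.
    destruct (filterlim_at_right_p_infty_gt f 0 ((f (- b) - c) / a) f_lim0) as [d [Hd Hbig]].
    exists d; split; [exact Hd|]. intros x Hx.
    specialize (Hbig (x + b) ltac:(lra)).
    pose proof (f_decreasing (- b) x ltac:(lra) ltac:(lra)).
    assert (f (- b) - c < a * f (x + b)).
    { replace (f (- b) - c) with (a * ((f (- b) - c) / a)) by (field; lra).
      now apply Rmult_lt_compat_l. }
    nra.
  - rewrite Rmax_right by lra.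
    destruct (filterlim_at_right_p_infty_gt f 0 (a * f b + c) f_lim0) as [d [Hd Hbig]].
    exists d; split; [exact Hd|]. intros x Hx.
    specialize (Hbig x ltac:(lra)).
    pose proof (f_decreasing b (x + b) ltac:(lra) ltac:(lra)).
    assert (a * f (x + b) < a * f b) by (now apply Rmult_lt_compat_l).
    nra.
Qed.

Lemma is_lim_fcheck : is_lim (fcheck f a b c) p_infty c.
Proof.
  destruct f_sh as (_ & _ & f_lim & _).
  assert (shift_lim : is_lim (fun x => f (x + b)) p_infty 0).
  { apply (is_lim_comp f (fun x => x + b) p_infty 0 p_infty f_lim).
    - eapply is_lim_plus; [apply is_lim_id | apply is_lim_const | reflexivity].
    - now exists 0. }
  replace (Finite c) with (Finite (a * 0 + c - 0)) by (f_equal; ring).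
  apply is_lim_minus'; [apply is_lim_plus' | exact f_lim].
  - exact (is_lim_scal_l _ a p_infty 0 shift_lim).
  - apply is_lim_const.
Qed.

Lemma fcheck_root_params x :
  is_root (fcheck f a b c) b x -> b * c < 0 ->
  (a < 1 /\ b < 0 /\ c > 0) \/ (a > 1 /\ b > 0 /\ c < 0).
Proof.
  intros [Hx Gx] Hbc. destruct (in_dom_pos b x Hx) as [Hx0 Hxb].
  destruct f_sh as (f_pos & _).
  pose proof (f_pos (x + b) Hxb). unfold fcheck in Gx.
  destruct (Rdichotomy b 0 b_neq0) as [Hneg | Hpos].
  - assert (Hc : 0 < c) by nra.
    pose proof (f_decreasing (x + b) x Hxb ltac:(lra)).
    left. repeat split; [| lra | lra].
    apply Rmult_lt_reg_r with (f (x + b)); lra.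
  - assert (Hc : c < 0) by nra.
    pose proof (f_decreasing x (x + b) Hx0 ltac:(lra)).
    right. repeat split; [| lra | lra].
    apply Rmult_lt_reg_r with (f (x + b)); lra.
Qed.

End Fcheck.

Theorem lemma3p5 (f : R -> R) (a b c : R) :
  strongly_hyperbolic f -> 0 < a -> b <> 0 -> c <> 0 ->
  let g := fcheck f a b c in
  (* at most two roots *)
  (forall x y z, is_root g b x -> is_root g b y -> is_root g b z ->
     x = y \/ x = z \/ y = z) /\
  exactly_one4
    (* 1. *)
    (exists x0 x1, x0 <> x1 /\ is_root g b x0 /\ is_root g b x1 /\
       (forall x, is_root g b x -> x = x0 \/ x = x1) /\
       changes_sign g x0 /\ changes_sign g x1 /\
       Derive g x0 <> 0 /\ Derive g x1 <> 0 /\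
       ((a < 1 /\ b < 0 /\ c > 0) \/ (a > 1 /\ b > 0 /\ c < 0)))
    (* 2. *)
    (exists x0, is_root g b x0 /\ (forall x, is_root g b x -> x = x0) /\
       ~ changes_sign g x0 /\ Derive g x0 = 0 /\
       ((a < 1 /\ b < 0 /\ c > 0) \/ (a > 1 /\ b > 0 /\ c < 0)))
    (* 3. *)
    (exists x0, is_root g b x0 /\ (forall x, is_root g b x -> x = x0) /\
       changes_sign g x0 /\ Derive g x0 <> 0 /\ b * c > 0)
    (* 4. *)
    ((forall x, ~ is_root g b x) /\ b * c < 0).
Proof.
  intros Hf Ha Hb Hc g.
  set (L := Rmax (- b) 0). set (G := fun x => b * g x).
  assert (G_derivable : forall x, L < x -> ex_derive G x)
    by (intros x Hx; apply ex_derive_scal, (ex_derive_fcheck f a b c Hf x Hx)).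
  assert (Derive_G_drop : forall x y, L < x -> x < y -> Derive G x <= 0 -> Derive G y < 0)
    by (intros x y Hx Hxy; unfold G; rewrite !Derive_scal; now apply Derive_fcheck_drop).
  pose proof (fcheck_neg_near_dom f a b c Hf Ha Hb) as G_neg_near_L.
  pose proof (is_lim_scal_l g b p_infty c (is_lim_fcheck f a b c Hf)) as G_lim.
  split.
  - intros x y z Rx Ry Rz.
    apply (root_on_at_most_two G L G_derivable Derive_G_drop); now apply root_on_scal.
  - apply exactly_one4_root_cases, (root_cases_scal L b g); [exact Hb|].
    destruct (Rtotal_order (b * c) 0) as [Hbc | [Hbc | Hbc]].
    + destruct (root_cases_of_neg_lim G L (b * c) G_derivable Derive_G_drop G_neg_near_L G_lim
        ((a < 1 /\ b < 0 /\ c > 0) \/ (a > 1 /\ b > 0 /\ c < 0)) (b * c < 0) Hbc)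
        as [H | [H | H]]; auto.
      intros [x Rx]. apply (fcheck_root_params f a b c Hf Hb x); [apply root_on_scal with b|]; auto.
    + exfalso. destruct (Rmult_integral b c Hbc); contradiction.
    + right; right; left.
      exact (crossing_root_of_pos_lim G L (b * c) G_derivable Derive_G_drop G_neg_near_L G_lim
        (b * c > 0) Hbc Hbc).
Qed.
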